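(* Let $P(x)=L(Ax)+\frac{\lambda}{2}\|x\|^2$ where $L:\mathbb{R}^n\to\mathbb{R}$ is convex, $A\in\mathbb{R}^{n\times d}$ and $\lambda>0$. Then for every $S\in V$ and every $\beta\in\mathbb{R}^n$ with $L^*(\beta)<\infty$, $$F(S)\ \ge\ D(\beta;S):=-L^*(\beta)-\frac{1}{2\lambda}\|A_S^\top\beta\|^2-\frac{1}{2\lambda}\|A_{S_>}^\top\beta\|_{k-|S|,2}^2 .$$
   Context: Let $d,k$ be positive integers with $k\le d$, and $[d]=\{1,\dots,d\}$ with its usual order. For nonempty $S\subseteq[d]$, $\max S$ is its largest element; set $\max\emptyset=0$. For $x\in\mathbb{R}^d$, $\mathrm{supp}(x)=\{i: x_i\neq0\}$. The state-space tree $G=(V,E)$: $V=\{S\subseteq[d]: |S|\le k \text{ and } k-|S|\le d-\max S\}$, with a directed edge $(S,T)\in E$ for $S,T\in V$ iff $T\neq\emptyset$ and $S=T\setminus\{\max T\}$. For $S\in V$, $\mathrm{desc}(S)$ is the set consisting of $S$ and all its descendants in $G$, $U(S)=\{x\in\mathbb{R}^d: \mathrm{supp}(x)\subseteq S' \text{ for some } S'\in\mathrm{desc}(S)\}$, $F(S)=\inf\{P(x): x\in U(S)\}$, and $S_>=\{i\in[d]: i>\max S\}$. $\|\cdot\|$ is the Euclidean norm. For $S\subseteq[d]$, $A_S$ is the submatrix of $A$ with columns indexed by $S$ (so $A_S^\top\beta\in\mathbb{R}^{|S|}$). For $z\in\mathbb{R}^m$ and integer $j\ge0$, $\|z\|_{j,2}$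 is the Euclidean norm of the vector obtained from $z$ by keeping (up to) $j$ entries of largest absolute value and setting the others to $0$ (so $\|z\|_{0,2}=0$). $L^*(\beta)=\sup_{y\in\mathbb{R}^n}\{\langle\beta,y\rangle-L(y)\}$ is the convex conjugate. *)

(* scalars in an arbitrary R : realFieldType (the statement is
   purely order-algebraic, so this generalises the real-number case). *)
From HB Require Import structures.
From mathcomp Require Import all_boot all_order all_algebra.
Set Implicit Arguments. Unset Strict Implicit. Unset Printing Implicit Defensive.
Import Order.TTheory GRing.Theory Num.Theory.
Local Open Scope ring_scope.

(* Index i : 'I_d represents the coordinate i+1 of [d] = {1,..,d}. *)

(* max S (1-based), with max of the empty set = 0 *)
Definition smax (d : nat) (S : {set 'I_d}) : nat := (\max_(i in S) i.+1)%N.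

Definition inV (d k : nat) (S : {set 'I_d}) : bool :=
  (#|S| <= k)%N && (k - #|S| <= d - smax S)%N.

Definition drop_max (d : nat) (T : {set 'I_d}) : {set 'I_d} :=
  [set i in T | i.+1 != smax T].

Definition tree_edge (d k : nat) : rel {set 'I_d} :=
  fun S T => [&& inV k S, inV k T, T != set0 & S == drop_max T].

Definition desc (d k : nat) (S : {set 'I_d}) : {set {set 'I_d}} :=
  [set T | connect (@tree_edge d k) S T].

Definition Sgt (d : nat) (S : {set 'I_d}) : {set 'I_d} :=
  [set i : 'I_d | (smax S < i.+1)%N].

Definition inU {R : realFieldType} (d k : nat) (S : {set 'I_d}) (x : 'cV[R]_d) : Prop :=
  exists2 S', S' \in desc k S & forall i : 'I_d, x i 0 != 0 -> i \in S'.

Definition dotv {R : realFieldType} (n : nat) (u v : 'cV[R]_n) : R :=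
  \sum_(i < n) u i 0 * v i 0.

Definition sqnorm {R : realFieldType} (n : nat) (u : 'cV[R]_n) : R :=
  \sum_(i < n) u i 0 ^+ 2.

Definition sqnorm_on {R : realFieldType} (n : nat) (S : {set 'I_n}) (z : 'cV[R]_n) : R :=
  \sum_(i in S) z i 0 ^+ 2.

Definition topsq {R : realFieldType} (j : nat) (s : seq R) : R :=
  \sum_(a <- take j (sort (fun a b : R => b <= a) [seq `|x| | x <- s])) a ^+ 2.

Definition restr {R : realFieldType} (n : nat) (S : {set 'I_n}) (z : 'cV[R]_n) : seq R :=
  [seq z i 0 | i <- enum S].

Definition convex_fun {R : realFieldType} (n : nat) (L : 'cV[R]_n -> R) : Prop :=
  forall (x y : 'cV[R]_n) (t : R), 0 <= t -> t <= 1 ->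
    L (t *: x + (1 - t) *: y) <= t * L x + (1 - t) * L y.

(* c = L^*(beta) = sup_y (<beta,y> - L y), a finite value (least upper bound) *)
Definition is_conj_value {R : realFieldType} (n : nat) (L : 'cV[R]_n -> R)
    (beta : 'cV[R]_n) (c : R) : Prop :=
  (forall y, dotv beta y - L y <= c) /\
  (forall c', (forall y, dotv beta y - L y <= c') -> c <= c').

Definition inf_ge {R : realFieldType} (T : Type) (P : T -> R) (U : T -> Prop) (D : R) : Prop :=
  forall x, U x -> D <= P x.

(* Weak duality. A point x of U(S) is supported on some descendant T of S, and
   every such T contains S, adds only indices beyond max S, and has at most k
   elements. Fenchel-Young gives L(Ax) >= <A^T beta, x> - L^*(beta); completing
   the square coordinatewise bounds <z, x> + lam/2 ||x||^2 below by
   -(1/2 lam) ||z_T||^2; and ||z_T||^2 = ||z_S||^2 + ||z_{T\S}||^2, where T\S is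
   a set of at most k - |S| indices of S_>, so its part is at most the sum of
   the k - |S| largest squares of z on S_>. *)
From HB Require Import structures.
From mathcomp Require Import all_boot all_order all_algebra.
From mathcomp Require Import zify ring lra.
Import Order.TTheory GRing.Theory Num.Theory.
Set Implicit Arguments. Unset Strict Implicit.
Local Open Scope ring_scope.

Lemma sum_sqr_subseq_le_take (R : realDomainType) (u t : seq R) (m : nat) :
  sorted (fun a b => b <= a) u -> all (>= 0) u -> subseq t u -> (size t <= m)%N ->
  \sum_(a <- t) a ^+ 2 <= \sum_(a <- take m u) a ^+ 2.
Proof.
elim: u t m => [|x u IH] t m.
  by move=> _ _; rewrite subseq0 => /eqP -> _; rewrite big_nil; case: m.
move=> sorted_xu /= /andP[x_ge0 u_ge0].
have sorted_u : sorted (fun a b => b <= a) u := path_sorted sorted_xu.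
have u_le_x : all (<= x) u.
  exact: order_path_min (fun a b c h1 h2 => le_trans h2 h1) sorted_xu.
case: m => [|m]; first by case: t.
rewrite /= big_cons; case: t => [|y t] sub_t size_t.
  by rewrite big_nil addr_ge0 ?sqr_ge0 // sumr_ge0 // => a _; apply: sqr_ge0.
rewrite big_cons; move: sub_t size_t => /=.
case: eqP => [-> sub_t size_t | _ sub_yt size_yt].
  by rewrite lerD2l IH.
have y_u : y \in u by apply: (mem_subseq sub_yt); rewrite mem_head.
(* y is skipped in favour of the larger head x, the rest compares by induction *)
have y_ge0 : 0 <= y := allP u_ge0 _ y_u.
have y_le_x : y <= x := allP u_le_x _ y_u.
apply: lerD; first by rewrite ler_pXn2r.
by apply: IH => //; apply: subseq_trans sub_yt; apply: subseq_cons.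
Qed.

Lemma sum_sqr_le_topsq (R : realFieldType) n (W G : {set 'I_n}) (z : 'cV[R]_n) (j : nat) :
  W \subset G -> (#|W| <= j)%N -> \sum_(i in W) z i 0 ^+ 2 <= topsq j (restr G z).
Proof.
move=> sWG cardW; rewrite /topsq; set ge := fun a b : R => b <= a.
have ge_total : total ge by move=> a b; apply: le_total.
have ge_trans : transitive ge by move=> a b c h1 h2; apply: le_trans h2 h1.
set t := [seq `|x| | x <- restr W z].
have sub_t : subseq t [seq `|x| | x <- restr G z].
  apply/map_subseq/map_subseq; rewrite /enum_mem.
  have -> : filter (mem W) (Finite.enum 'I_n) =
            filter (mem W) (filter (mem G) (Finite.enum 'I_n)).
    rewrite -filter_predI; apply: eq_filter => i /=.
    by case W_i: (i \in W) => //=; rewrite (subsetP sWG).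
  exact: filter_subseq.
have -> : \sum_(i in W) z i 0 ^+ 2 = \sum_(a <- sort ge t) a ^+ 2.
  rewrite (perm_big _ (permEl (perm_sort ge t))) big_map big_map big_enum.
  by apply: eq_bigr => i _; rewrite real_normK ?num_real.
apply: sum_sqr_subseq_le_take.
- exact: sort_sorted.
- by rewrite all_sort; apply/allP => _ /mapP[x _ ->].
- exact: subseq_sort.
- by rewrite size_sort !size_map -cardE.
Qed.

Lemma smax_subset d (A B : {set 'I_d}) : A \subset B -> (smax A <= smax B)%N.
Proof.
move=> sAB; apply/bigmax_leqP => i A_i.
exact: leq_bigmax_cond (subsetP sAB _ A_i).
Qed.

Lemma smax_drop_max d (T : {set 'I_d}) : T != set0 -> (smax (drop_max T) < smax T)%N.
Proof.
case/set0Pn=> i0 T_i0.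
have smax_gt0 : (0 < smax T)%N by apply: leq_trans (leq_bigmax_cond _ T_i0).
suff : (smax (drop_max T) <= (smax T).-1)%N by lia.
apply/bigmax_leqP => i; rewrite inE => /andP[T_i /eqP ne_i].
have : (i.+1 <= smax T)%N by apply: leq_bigmax_cond.
lia.
Qed.

Definition extends_above d k (S T : {set 'I_d}) :=
  [/\ S \subset T, T :\: S \subset Sgt S & (#|T| <= k)%N].

Lemma extends_above_edge d k (S T T' : {set 'I_d}) :
  extends_above k S T -> tree_edge k T T' -> extends_above k S T'.
Proof.
case=> sST sTS_gt _ /and4P[_ /andP[cardT' _] T'_n0 /eqP defT].
have sTT' : T \subset T' by rewrite defT; apply/subsetP => i; rewrite inE => /andP[].
split=> //; first exact: subset_trans sTT'.
apply/subsetP => i; rewrite inE => /andP[S_i' T'_i].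
case T_i: (i \in T); first by apply: (subsetP sTS_gt); rewrite inE S_i' T_i.
(* the only index of T' outside T is max T', which exceeds max T >= max S *)
move: T_i; rewrite defT inE T'_i /= => /negbFE /eqP max_i.
rewrite inE max_i; have := smax_subset sST; have := smax_drop_max T'_n0.
rewrite -defT; lia.
Qed.

Lemma desc_extends_above d k (S T : {set 'I_d}) :
  inV k S -> T \in desc k S -> extends_above k S T.
Proof.
move=> /andP[cardS _]; rewrite inE => /connectP[p path_p ->].
have ext_last U : extends_above k S U -> path (@tree_edge d k) U p ->
    extends_above k S (last U p).
  elim: p U {path_p} => [|U' p IH] U ext_U //= /andP[edge path_p].
  exact: IH (extends_above_edge ext_U edge) path_p.
by apply: ext_last path_p; split; rewrite ?setDv ?sub0set.
Qed.

Lemma sqnorm_on_desc_le (R : realFieldType) d k (S T : {set 'I_d}) (z : 'cV[R]_d) :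
  inV k S -> T \in desc k S ->
  sqnorm_on T z <= sqnorm_on S z + topsq (k - #|S|) (restr (Sgt S) z).
Proof.
move=> V_S /(desc_extends_above V_S)[sST sTS_gt cardT].
rewrite /sqnorm_on (big_setID S) /= (setIidPr sST) lerD2l.
by apply: sum_sqr_le_topsq; rewrite // cardsD (setIidPr sST) leq_sub2r.
Qed.

Lemma dotv_mulmx (R : realFieldType) n d (A : 'M[R]_(n, d)) beta x :
  dotv beta (A *m x) = dotv (A^T *m beta) x.
Proof.
rewrite /dotv; under eq_bigr do rewrite mxE big_distrr.
rewrite exchange_big; apply: eq_bigr => i _.
rewrite mxE big_distrl; apply: eq_bigr => j _.
by rewrite !mxE /=; ring.
Qed.

Lemma quadratic_ge (R : realFieldType) (lam a x : R) : 0 < lam ->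
  - ((2 * lam)^-1 * a ^+ 2) <= a * x + lam / 2 * x ^+ 2.
Proof.
move=> lam_gt0.
have -> : a * x + lam / 2 * x ^+ 2 =
          (2 * lam)^-1 * (lam * x + a) ^+ 2 - (2 * lam)^-1 * a ^+ 2.
  by field; rewrite gt_eqF.
rewrite lerDr mulr_ge0 ?sqr_ge0 // invr_ge0; lra.
Qed.

Lemma dotv_add_sqnorm_ge (R : realFieldType) d (T : {set 'I_d}) (z x : 'cV[R]_d)
    (lam : R) : 0 < lam -> (forall i, x i 0 != 0 -> i \in T) ->
  - ((2 * lam)^-1 * sqnorm_on T z) <= dotv z x + lam / 2 * sqnorm x.
Proof.
move=> lam_gt0 supp_x.
rewrite /dotv /sqnorm /sqnorm_on mulr_sumr mulr_sumr -big_split -sumrN big_mkcond.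
apply: ler_sum => i _; case: ifPn => [_|T_i]; first exact: quadratic_ge.
have -> : x i 0 = 0 by apply/eqP; apply: contraNT T_i => /supp_x.
by rewrite mulr0 expr0n /= mulr0 addr0.
Qed.

Theorem mainTheorem4 (R : realFieldType) (n d k : nat)
  (L : 'cV[R]_n -> R) (A : 'M[R]_(n, d)) (lam : R) :
  (0 < d)%N -> (0 < k)%N -> (k <= d)%N ->
  convex_fun L -> 0 < lam ->
  let P := fun x : 'cV[R]_d => L (A *m x) + lam / 2 * sqnorm x in
  forall (S : {set 'I_d}), inV k S ->
  forall (beta : 'cV[R]_n) (c : R), is_conj_value L beta c ->
  let z := A^T *m beta in
  inf_ge P (inU k S)
    (- c - (2 * lam)^-1 * sqnorm_on S z
         - (2 * lam)^-1 * topsq (k - #|S|) (restr (Sgt S) z)).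
Proof.
move=> _ _ _ _ lam_gt0 P S V_S beta c [conj_ub _] z x [T desc_T supp_x].
have fenchel_young := conj_ub (A *m x); rewrite dotv_mulmx -/z in fenchel_young.
have quad := dotv_add_sqnorm_ge z lam_gt0 supp_x.
have inv_ge0 : 0 <= (2 * lam)^-1 by rewrite invr_ge0; lra.
have top := ler_wpM2l inv_ge0 (sqnorm_on_desc_le z V_S desc_T).
rewrite mulrDr in top; rewrite /P; lra.
Qed.
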